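(* Let $\mathbf{h}\in\mathbb{F}_2^n$ and let $\mathbf{H}$ be the $m\times n$ binary matrix, $1\le m\le n$, whose $r$-th row ($r=1,\ldots,m$) is the cyclic shift of $\mathbf{h}$ to the right by $r-1$ positions. For $1\le\sigma\le n$ let $\Sigma_{\sigma,r}$ be the set of $\sigma$-subsets of columns resolved by row $r$. Then the number of $\sigma$-subsets of columns resolved by $\mathbf{H}$ satisfies $$\Big|\bigcup_{r=1}^m\Sigma_{\sigma,r}\Big|\;\le\; m\,|\Sigma_{\sigma,1}|-\frac{2}{m}\sum_{\kappa=1}^{m-1}(m-\kappa)\,|\Sigma_{\sigma,1}\cap\Sigma_{\sigma,1+\kappa}|.$$
   Context: A row of a binary matrix resolves a set $I$ of column indices if its restriction to the columns in $I$ has Hamming weight exactly one. *)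

From HB Require Import structures.
From mathcomp Require Import all_boot all_order all_algebra.
Set Implicit Arguments. Unset Strict Implicit. Unset Printing Implicit Defensive.
Import Order.TTheory GRing.Theory Num.Theory.

(* (j - k) mod n, as an element of 'I_n (columns are 0-indexed). *)
Definition csub (n : nat) (j : 'I_n) (k : nat) : 'I_n :=
  Ordinal (ltn_pmod (j + n - k %% n) (leq_ltn_trans (leq0n j) (ltn_ord j))).

(* The m x n binary matrix whose row r (0-indexed, r = 0..m-1) is the cyclic
   right shift of h by r positions: H r j = h_{(j - r) mod n}. *)
Definition cshift_mx (m n : nat) (h : 'rV['F_2]_n) : 'M['F_2]_(m, n) :=
  \matrix_(r < m, j < n) h ord0 (csub j r).

Definition resolves (n : nat) (v : 'rV['F_2]_n) (I : {set 'I_n}) : bool :=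
  #|[set j in I | v ord0 j != 0%R]| == 1.

Definition Sigma (m n : nat) (H : 'M['F_2]_(m, n)) (sigma : nat) (r : 'I_m)
  : {set {set 'I_n}} :=
  [set I : {set 'I_n} | (#|I| == sigma) && resolves (row r H) I].

From HB Require Import structures.
From mathcomp Require Import all_boot all_order all_algebra zify.
Import Order.TTheory GRing.Theory Num.Theory.
Set Implicit Arguments. Unset Strict Implicit. Unset Printing Implicit Defensive.

(* The argument has a combinatorial half and a symmetry half.
   1. For any sets B_0, ..., B_(m-1) of a finite type,
        m |U B_r| + 2 sum_(i<j) |B_i n B_j| <= m sum_r |B_r|.
      Counting pointwise, an element lying in exactly d >= 1 of the sets
      contributes m + d(d-1) on the left and m d on the right, and
      (d - 1)(d - m) <= 0 since d <= m.
   2. Shifting the columns cyclically by i maps the sets resolved by row k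
      bijectively onto those resolved by row i + k.  Hence every row resolves
      |Sigma_1| sets and |Sigma_i n Sigma_j| only depends on the gap j - i.
   3. Grouping the pairs i < j < m by their gap k = j - i (there are m - k of
      them) and dividing by m in the rationals gives the theorem. *)

Lemma card_indicator (T : finType) (A : {pred T}) : #|A| = \sum_x (x \in A : nat).
Proof. by rewrite -sum1_card big_mkcond /=; apply: eq_bigr => x _; case: (x \in A). Qed.

(* Expanding the square of a sum of indicators into diagonal and off-diagonal
   terms; this is how pairwise intersections enter the count. *)
Lemma sum_bool_sq (m : nat) (y : 'I_m -> bool) :
  (\sum_(r < m) (y r : nat)) * (\sum_(r < m) (y r : nat)) =
  2 * (\sum_(i < m) \sum_(j < m | i < j) (y i * y j)) + \sum_(r < m) (y r : nat).
Proof.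
rewrite big_distrl /=.
rewrite (eq_bigr (fun i : 'I_m => \sum_(j < m | i < j) (y i * y j) + (y i : nat)
             + \sum_(j < m | j < i) (y i * y j))); last first.
  move=> i _; rewrite big_distrr /= (bigID (fun j : 'I_m => i < j)) /= -addnA; congr (_ + _).
  rewrite (bigD1 i) /=; last by rewrite ltnn.
  rewrite mulnb andbb; congr (_ + _); apply: eq_bigl => j.
  by rewrite -leqNgt ltn_neqAle andbC.
rewrite !big_split /= mul2n -addnn -!addnA; congr (_ + _).
rewrite addnC; congr (_ + _).
rewrite (eq_bigr (fun i : 'I_m => \sum_(j < m) (if j < i then y i * y j else 0))); last first.
  by move=> i _; rewrite big_mkcond.
rewrite exchange_big /=; apply: eq_bigr => j _.
by rewrite [RHS]big_mkcond /=; apply: eq_bigr => i _; rewrite mulnC.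
Qed.

(* The pointwise inequality: an element of multiplicity d (with b its
   membership in the union, Q the number of pairs of sets containing it). *)
Lemma union_pairs_point (m d Q : nat) (b : bool) :
  d * d = 2 * Q + d -> d <= m -> b <= d -> m * b + 2 * Q <= m * d.
Proof. by case: b => /= ? ? ?; nia. Qed.

Lemma union_pairs_bound (T : finType) (m : nat) (B : nat -> {set T}) :
  m * #|\bigcup_(r < m) B r| + 2 * \sum_(i < m) \sum_(j < m | i < j) #|B i :&: B j|
    <= m * \sum_(r < m) #|B r|.
Proof.
rewrite card_indicator.
under [X in 2 * X]eq_bigr => i _ do under eq_bigr => j _ do rewrite card_indicator.
under [X in _ <= m * X]eq_bigr => i _ do rewrite card_indicator.
under [X in 2 * X]eq_bigr => i _ do rewrite exchange_big.
rewrite [X in 2 * X]exchange_big [X in _ <= m * X]exchange_big /=.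
rewrite !big_distrr -big_split /=; apply: leq_sum => x _.
set d := \sum_(r < m) _.
apply: union_pairs_point.
- rewrite /d sum_bool_sq; congr (2 * _ + _).
  by apply: eq_bigr => i _; apply: eq_bigr => j _; rewrite in_setI mulnb.
- by rewrite /d -[X in _ <= X]card_ord -sum1_card; apply: leq_sum => i _; case: (x \in B i).
- by case: bigcupP => // -[r _ x_Br]; rewrite /d (bigD1 r) //= x_Br.
Qed.

Lemma sum_rev_pos (c : nat -> nat) (m : nat) :
  \sum_(i < m) c (m - i) = \sum_(k < m.+1 | 0 < k) c k.
Proof.
rewrite [RHS]big_mkcond big_ord_recl /= add0n (reindex_inj rev_ord_inj) /=.
by apply: eq_bigr => j _; rewrite /bump /= add1n subKn.
Qed.

(* A sum over pairs i < j < m of a function of the gap j - i: each gap k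
   occurs m - k times. *)
Lemma sum_pairs_by_gap (c : nat -> nat) (m : nat) :
  \sum_(i < m) \sum_(j < m | i < j) c (j - i) = \sum_(k < m | 0 < k) (m - k) * c k.
Proof.
elim: m => [|m IHm]; first by rewrite !big_ord0.
rewrite big_ord_recr /= (big_pred0 _ _ _ (P := fun j : 'I_m.+1 => m < j)); last first.
  by move=> j /=; rewrite ltnNge -ltnS ltn_ord.
rewrite addn0.
under eq_bigr => i _ do rewrite big_mkcond big_ord_recr /= ltn_ord -big_mkcond /=.
rewrite big_split /= IHm sum_rev_pos.
under [RHS]eq_bigr => k _ do rewrite subSn -1?ltnS // mulSn addnC.
rewrite big_split /= [X in _ = X + _]big_mkcond big_ord_recr /= subnn mul0n if_same addn0.
by rewrite -big_mkcond.
Qed.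

Lemma csub_spec (n : nat) (x : 'I_n) (k : nat) : csub x k + k = x %[mod n].
Proof.
have n_gt0 : 0 < n by apply: leq_ltn_trans (ltn_ord x).
have kn : k %% n <= n by rewrite ltnW // ltn_pmod.
rewrite /csub /= modnDml -modnDmr -addnBA // -addnA subnK // modnDr.
by [].
Qed.

Lemma csub_unique (n : nat) (x y : 'I_n) (k : nat) :
  y + k = x %[mod n] -> csub x k = y.
Proof.
move=> eq_y; apply: ord_inj.
rewrite -(modn_small (ltn_ord y)) -(modn_small (ltn_ord (csub x k))).
by apply/eqP; rewrite -(eqn_modDr k) csub_spec eq_y.
Qed.

Lemma csubA (n : nat) (x : 'I_n) (a b : nat) : csub (csub x a) b = csub x (a + b).
Proof.
by symmetry; apply: csub_unique; rewrite (addnC a b) addnA -modnDml csub_spec modnDml csub_spec.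
Qed.

Lemma csub_inj (n k : nat) : injective (fun x : 'I_n => csub x k).
Proof.
move=> x y /= eq_xy; apply: ord_inj.
rewrite -(modn_small (ltn_ord x)) -(modn_small (ltn_ord y)).
by rewrite -(csub_spec x k) eq_xy csub_spec.
Qed.

Lemma preimset_inj (T : finType) (f : T -> T) :
  injective f -> injective (fun A : {set T} => f @^-1: A).
Proof.
move=> f_inj A B /= eqAB; have [g fK gK] := injF_bij f_inj.
by apply/setP => y; have := congr1 (fun S : {set T} => g y \in S) eqAB; rewrite /= !inE gK.
Qed.

(* The sigma-subsets resolved by the cyclic right shift of h by r positions,
   for an arbitrary shift r (not only the rows of the matrix). *)
Definition shiftSigma (n : nat) (h : 'rV['F_2]_n) (sigma r : nat) : {set {set 'I_n}} :=
  [set I : {set 'I_n} | (#|I| == sigma) &&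
                        (#|[set j in I | h ord0 (csub j r) != 0%R]| == 1)].

Lemma Sigma_cshift (m n : nat) (h : 'rV['F_2]_n) (sigma : nat) (r : 'I_m) :
  Sigma (cshift_mx m h) sigma r = shiftSigma h sigma r.
Proof.
apply/setP => I; rewrite !inE /resolves.
suff -> : [set j in I | row r (cshift_mx m h) ord0 j != 0%R]
        = [set j in I | h ord0 (csub j r) != 0%R] by [].
by apply/setP => j; rewrite !inE !mxE.
Qed.

Lemma shiftSigma_preim (n : nat) (h : 'rV['F_2]_n) (sigma i k : nat) (I : {set 'I_n}) :
  ((fun x => csub x i) @^-1: I \in shiftSigma h sigma (i + k)) = (I \in shiftSigma h sigma k).
Proof.
rewrite !inE card_preimset; last exact: csub_inj.
congr (_ && (_ == 1)).
have -> : [set j in (fun x => csub x i) @^-1: I | h ord0 (csub j (i + k)) != 0%R]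
  = (fun x => csub x i) @^-1: [set y in I | h ord0 (csub y k) != 0%R].
  by apply/setP => x; rewrite !inE csubA.
by rewrite card_preimset //; exact: csub_inj.
Qed.

Lemma card_shiftSigmaI (n : nat) (h : 'rV['F_2]_n) (sigma i j : nat) : i <= j ->
  #|shiftSigma h sigma i :&: shiftSigma h sigma j|
    = #|shiftSigma h sigma 0 :&: shiftSigma h sigma (j - i)|.
Proof.
move=> le_ij; rewrite -(card_preimset _ (preimset_inj (@csub_inj n i))).
apply: eq_card => I; rewrite [in RHS]in_setI -(shiftSigma_preim h sigma i 0 I) addn0.
by rewrite -(shiftSigma_preim h sigma i (j - i) I) subnKC // [in LHS]inE in_setI.
Qed.

Lemma card_shiftSigma (n : nat) (h : 'rV['F_2]_n) (sigma r : nat) :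
  #|shiftSigma h sigma r| = #|shiftSigma h sigma 0|.
Proof. by rewrite -[shiftSigma h sigma r]setIid card_shiftSigmaI // subnn setIid. Qed.

Local Open Scope ring_scope.

Lemma nat_bound_to_rat (m U S P : nat) : (0 < m)%N -> (m * U + 2 * P <= m * (m * S))%N ->
  (U%:R : rat) <= m%:R * S%:R - 2%:R / m%:R * P%:R.
Proof.
move=> m_gt0 bound; have m_pos : (0 : rat) < m%:R by rewrite ltr0n.
rewrite lerBrDr -(ler_pM2l m_pos) mulrDr 2!mulrA (mulrC m%:R 2%:R) -(mulrA 2%:R).
by rewrite mulfV ?gt_eqF // mulr1 -!natrM -natrD ler_nat.
Qed.

Theorem mainTheorem7 (n m : nat) (h : 'rV['F_2]_n) (sigma : nat)
  (hm : (0 < m)%N) (hmn : (m <= n)%N) (hs1 : (1 <= sigma)%N) (hsn : (sigma <= n)%N) :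
  let H := cshift_mx m h in
  let r1 : 'I_m := Ordinal hm in
  (#|\bigcup_(r < m) Sigma H sigma r|%:R : rat)
    <= m%:R * #|Sigma H sigma r1|%:R
       - 2%:R / m%:R *
         \sum_(k < m | (0 < k)%N)
            ((m - k)%:R * #|Sigma H sigma r1 :&: Sigma H sigma k|%:R).
Proof.
cbv zeta.
under eq_bigr => r _ do rewrite Sigma_cshift.
under [X in _ / _ * X]eq_bigr => k _ do rewrite !Sigma_cshift -natrM.
rewrite Sigma_cshift -natr_sum; apply: nat_bound_to_rat => //.
set B := shiftSigma h sigma.
have sum_card : (\sum_(r < m) #|B r| = m * #|B 0|)%N.
  by rewrite (eq_bigr (fun _ => #|B 0|)) ?sum_nat_const ?card_ord // => r _; apply: card_shiftSigma.
have sum_pairs : (\sum_(i < m) \sum_(j < m | i < j) #|B i :&: B j|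
                   = \sum_(k < m | 0 < k) (m - k) * #|B 0 :&: B k|)%N.
  rewrite -(sum_pairs_by_gap (fun k => #|B 0 :&: B k|)).
  by apply: eq_bigr => i _; apply: eq_bigr => j lt_ij; apply/card_shiftSigmaI/ltnW.
by rewrite -sum_card -sum_pairs union_pairs_bound.
Qed.
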